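(* Let $P$ be a finite set of points in the plane and let $f$ be a stacking order of $\mathcal{D}(P)$. Then $$\mathrm{vis}(\mathcal{D}(P),f)\ \ge\ \lim_{\varepsilon\to 0}\mathrm{vis}(\mathcal{D}(\varepsilon P),f),$$ where on the right-hand side $f$ denotes the corresponding stacking order of $\mathcal{D}(\varepsilon P)$.
   Context: For a point $p$ in the plane, $D(p)$ denotes the closed disk of radius $1$ centered at $p$, and for a finite point set $P$, $\mathcal{D}(P)=\{D(p): p\in P\}$. A stacking order of a finite collection $\mathcal{D}$ of $n$ distinct unit disks in the plane is a bijection $f:\mathcal{D}\to\{1,\dots,n\}$; $f(D)$ is regarded as the height ($z$-coordinate) of $D$, and the arrangement is viewed from below. A point $x$ on the boundary circle of $D\in\mathcal{D}$ is visible if $x$ does not lie in any disk $D'\in\mathcal{D}$ with $f(D')<f(D)$. The visible perimeter $\mathrm{vis}(\mathcal{D},f)$ is the total length of all visible boundary points, summed over all disks of $\mathcal{D}$. For $\varepsilon>0$ and a point $p=(x,y)$, $\varepsilon p=(\varepsilon x,\varepsilon y)$, and $\varepsilon P=\{\varepsilon p: p\in P\}$. A stacking order $f$ of $\mathcal{D}(P)$ is identified with the stacking order of $\mathcal{D}(\varepsilon P)$ given by $D(\varepsilon p)\mapsto f(D(p))$. *)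

From HB Require Import structures.
From mathcomp Require Import all_boot all_order all_algebra.
From mathcomp Require Import all_classical all_reals all_analysis.
Set Implicit Arguments. Unset Strict Implicit. Unset Printing Implicit Defensive.
Import Order.TTheory GRing.Theory Num.Theory.
Import numFieldNormedType.Exports.
Local Open Scope classical_set_scope.
Local Open Scope ring_scope.

Definition in_unit_disk (R : realType) (c x : R * R) : Prop :=
  (x.1 - c.1) ^+ 2 + (x.2 - c.2) ^+ 2 <= 1.

Definition bdry_pt (R : realType) (c : R * R) (t : R) : R * R :=
  (c.1 + cos t, c.2 + sin t).

Definition vis_arc (R : realType) (n : nat) (P : 'I_n -> R * R)
  (f : 'I_n -> nat) (i : 'I_n) : set R :=
  [set t | 0 <= t < 2 * pi /\
     forall j : 'I_n, (f j < f i)%N -> ~ in_unit_disk (P j) (bdry_pt (P i) t)].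

(* visible perimeter: sum over disks of the length (Lebesgue measure of the
   arc-length parameter set) of the visible boundary *)
Definition vis (R : realType) (n : nat) (P : 'I_n -> R * R)
  (f : 'I_n -> nat) : R :=
  \sum_(i < n) fine (@lebesgue_measure R (vis_arc P f i)).

Definition scale_pts (R : realType) (n : nat) (eps : R) (P : 'I_n -> R * R)
  : 'I_n -> R * R := fun i => (eps * (P i).1, eps * (P i).2).

From HB Require Import structures.
From mathcomp Require Import all_boot all_order all_algebra.
From mathcomp Require Import all_classical all_reals all_analysis.
From mathcomp Require Import ring.
Set Implicit Arguments.
Unset Strict Implicit.
Unset Printing Implicit Defensive.
Import Order.TTheory GRing.Theory Num.Theory.
Import numFieldNormedType.Exports.
Local Open Scope classical_set_scope.
Local Open Scope ring_scope.

(* Scaling the centres by eps, the boundary point of D(eps a) at angle t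
   lies outside D(eps b) iff eps * (eps |a - b|^2 + 2 (a - b).u_t) > 0,
   a condition that, once true, stays true as eps grows.  Hence every
   visible arc only grows with eps, vis (eps P) is nondecreasing on
   (0, +oo) and bounded below by 0, so its right limit at 0 exists and is
   at most its value at eps = 1, namely vis P. *)

Lemma lebesgue_measure_le (R : realType) (A B : set R) :
  A `<=` B -> (lebesgue_measure A <= lebesgue_measure B)%E.
Proof.
move=> subAB; rewrite /lebesgue_measure /lebesgue_stieltjes_measure /measure_extension.
exact: le_outer_measure.
Qed.

Lemma vis_arc_fin_num (R : realType) n (P : 'I_n -> R * R) f i :
  lebesgue_measure (vis_arc P f i) \is a fin_num.
Proof.
rewrite ge0_fin_numE ?measure_ge0//.
apply: (le_lt_trans (lebesgue_measure_le (B := [set` `[0, 2 * pi[%R]) _)).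
  by move=> t [/andP[t0 t2] _] /=; rewrite in_itv /= t0 t2.
by rewrite lebesgue_measure_itv /=; case: ifP => _; rewrite ?ltry.
Qed.

Lemma sqr_dist_scaled_bdry_pt (R : realType) (e : R) (a b : R * R) (t : R) :
  let s := (a.1 - b.1) ^+ 2 + (a.2 - b.2) ^+ 2 in
  let q := (a.1 - b.1) * cos t + (a.2 - b.2) * sin t in
  ((bdry_pt (e * a.1, e * a.2) t).1 - e * b.1) ^+ 2 +
  ((bdry_pt (e * a.1, e * a.2) t).2 - e * b.2) ^+ 2 = e * (e * s + 2 * q) + 1.
Proof. by rewrite /bdry_pt /= -[X in _ = _ + X](cos2Dsin2 t); ring. Qed.

Lemma scale_pos_mono (R : realFieldType) (e1 e2 s q : R) :
  0 < e1 -> e1 <= e2 -> 0 <= s ->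
  0 < e1 * (e1 * s + 2 * q) -> 0 < e2 * (e2 * s + 2 * q).
Proof.
move=> e1_gt0 le_e12 s_ge0; rewrite pmulr_rgt0// => h1.
apply: mulr_gt0; first exact: lt_le_trans le_e12.
by apply: (lt_le_trans h1); rewrite lerD2r ler_wpM2r.
Qed.

Lemma vis_arc_scale_mono (R : realType) n (P : 'I_n -> R * R) f i (e1 e2 : R) :
  0 < e1 -> e1 <= e2 ->
  vis_arc (scale_pts e1 P) f i `<=` vis_arc (scale_pts e2 P) f i.
Proof.
move=> e1_gt0 le_e12 t [t_itv out1]; split => // j /out1.
rewrite /in_unit_disk /scale_pts !sqr_dist_scaled_bdry_pt => /negP.
rewrite -ltNge -[X in X < _]add0r ltrD2r => out_e1; apply/negP.
rewrite -ltNge -[X in X < _]add0r ltrD2r.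
by apply: (scale_pos_mono e1_gt0 le_e12 _ out_e1); rewrite addr_ge0 ?sqr_ge0.
Qed.

Lemma vis_scale_mono (R : realType) n (P : 'I_n -> R * R) f (e1 e2 : R) :
  0 < e1 -> e1 <= e2 -> vis (scale_pts e1 P) f <= vis (scale_pts e2 P) f.
Proof.
move=> e1_gt0 le_e12; apply: ler_sum => i _.
apply: fine_le; rewrite ?vis_arc_fin_num//.
exact/lebesgue_measure_le/vis_arc_scale_mono.
Qed.

Lemma vis_ge0 (R : realType) n (P : 'I_n -> R * R) f : 0 <= vis P f.
Proof. by apply: sumr_ge0 => i _; apply/fine_ge0/measure_ge0. Qed.

Lemma scale_pts1 (R : realType) n (P : 'I_n -> R * R) : scale_pts 1 P = P.
Proof. by apply: funext => i; rewrite /scale_pts !mul1r -surjective_pairing. Qed.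

Theorem lemma1 (R : realType) (n : nat) (P : 'I_n -> R * R)
  (f : 'I_n -> nat) (hP : injective P) (hf : injective f)
  (hrange : forall i, (1 <= f i <= n)%N) :
  cvg ((fun eps : R => vis (scale_pts eps P) f) @ 0^'+) /\
  lim ((fun eps : R => vis (scale_pts eps P) f) @ 0^'+) <= vis P f.
Proof.
have vis_cvg : cvg ((fun eps : R => vis (scale_pts eps P) f) @ 0^'+).
  apply: nondecreasing_at_right_is_cvgr.
    near=> x => a b; rewrite !in_itv /= => /andP[a_gt0 _] _.
    exact: vis_scale_mono.
  by near=> x; exists 0 => _ [y _ <-]; exact: vis_ge0.
split => //; apply: limr_le => //; rewrite -[P in vis P f]scale_pts1.
near=> e; apply: vis_scale_mono.
  by near: e; exact: nbhs_right_gt.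
by apply/ltW; near: e; exact: nbhs_right_lt.
Unshelve. all: by end_near.
Qed.
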